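(* Let $k$ be an algebraically closed field. For $i = 1,2$ let $K_i \subseteq G_i$ be reductive groups over $k$, and put $G := G_1 \times G_2$ and $K := K_1 \times K_2$. Let $H \subseteq G$ be a subgroup. Then $H$ is relatively $G$-completely reducible with respect to $K$ if and only if $H$ is relatively $G$-completely reducible with respect to $K_i$ for $i = 1,2$ (where $K_1$ and $K_2$ are regarded as the subgroups $K_1\times\{1\}$ and $\{1\}\times K_2$ of $G$).
   Context: For a cocharacter $\lambda$ of a reductive group $G$, $P_\lambda = \{g \in G \mid \lim_{a\to 0}\lambda(a)g\lambda(a)^{-1} \text{ exists}\}$ and $L_\lambda = \{g \in G \mid \lim_{a\to 0}\lambda(a)g\lambda(a)^{-1} = g\}$. For a reductive subgroup $M$ of $G$, $H$ is relatively $G$-completely reducible with respect to $M$ if for every cocharacter $\lambda$ of $M$ with $H \subseteq P_\lambda$ there is a cocharacter $\mu$ of $M$ with $P_\lambda = P_\mu$ and $H \subseteq L_\mu$ (here $P_\lambda,L_\mu$ are subgroups of $G$). *)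

(* linear algebraic groups realised concretely as
   Zariski-closed subgroups of GL_n(k), k algebraically closed. *)
From HB Require Import structures.
From mathcomp Require Import all_boot all_order all_algebra all_field.
From mathcomp Require Import mpoly.
Set Implicit Arguments.
Unset Strict Implicit.
Unset Printing Implicit Defensive.
Import GRing.Theory.
Local Open Scope ring_scope.

Section AlgGroups.
Variables (k : closedFieldType) (n : nat).

Definition mx_coords (A : 'M[k]_n) : 'I_(n * n) -> k := fun i => mxvec A 0 i.

Definition GLn (A : 'M[k]_n) : Prop := A \in unitmx.

Definition zariski_closed_in (S T : 'M[k]_n -> Prop) : Prop :=
  exists P : {mpoly k[n * n]} -> Prop,
    forall A, S A <-> (T A /\ forall p, P p -> p.@[mx_coords A] = 0).

Definition is_subgroup (H G : 'M[k]_n -> Prop) : Prop :=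
  [/\ H 1%:M, (forall A B, H A -> H B -> H (A *m B)),
      (forall A, H A -> GLn A /\ H (invmx A)) & (forall A, H A -> G A)].

Definition linear_algebraic_group (G : 'M[k]_n -> Prop) : Prop :=
  is_subgroup G GLn /\ zariski_closed_in G GLn.

Definition closed_subgroup (H G : 'M[k]_n -> Prop) : Prop :=
  is_subgroup H G /\ zariski_closed_in H G.

Definition zariski_connected (S : 'M[k]_n -> Prop) : Prop :=
  forall A B : 'M[k]_n -> Prop,
    zariski_closed_in A S -> zariski_closed_in B S ->
    (forall x, S x <-> A x \/ B x) -> (forall x, ~ (A x /\ B x)) ->
    (forall x, ~ A x) \/ (forall x, ~ B x).

Definition normal_in (U G : 'M[k]_n -> Prop) : Prop :=
  forall g u, G g -> U u -> U (g *m u *m invmx g).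

Definition unipotent (g : 'M[k]_n) : Prop :=
  exists m : nat, iter m (mulmx (g - 1%:M)) 1%:M = 0.

(* reductive: trivial unipotent radical, i.e. every closed connected normal
   unipotent subgroup is trivial *)
Definition reductive (G : 'M[k]_n -> Prop) : Prop :=
  linear_algebraic_group G /\
  forall U, closed_subgroup U G -> zariski_connected U -> normal_in U G ->
    (forall u, U u -> unipotent u) -> forall u, U u -> u = 1%:M.

(* a morphism of varieties G_m -> M_n: entries are Laurent polynomials *)
Definition regular_on_Gm (f : k -> 'M[k]_n) : Prop :=
  exists (N : nat) (q : 'I_n -> 'I_n -> {poly k}),
    forall a, a != 0 -> forall i j, a ^+ N * f a i j = (q i j).[a].

Definition cocharacter (M : 'M[k]_n -> Prop) (lam : k -> 'M[k]_n) : Prop :=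
  [/\ (forall a, a != 0 -> M (lam a)),
      (forall a b, a != 0 -> b != 0 -> lam (a * b) = lam a *m lam b)
    & regular_on_Gm lam].

(* lim_{a -> 0} f a exists in G and equals L: f extends to a morphism
   A^1 -> G with value L at 0 *)
Definition limit_at0 (G : 'M[k]_n -> Prop) (f : k -> 'M[k]_n) (L : 'M[k]_n)
  : Prop :=
  G L /\ exists q : 'I_n -> 'I_n -> {poly k},
    (forall a, a != 0 -> forall i j, f a i j = (q i j).[a]) /\
    (forall i j, L i j = (q i j).[0]).

Definition conj_curve (lam : k -> 'M[k]_n) (g : 'M[k]_n) : k -> 'M[k]_n :=
  fun a => lam a *m g *m invmx (lam a).

Definition Pl (G : 'M[k]_n -> Prop) (lam : k -> 'M[k]_n) (g : 'M[k]_n) : Prop :=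
  G g /\ exists L, limit_at0 G (conj_curve lam g) L.

Definition Ll (G : 'M[k]_n -> Prop) (lam : k -> 'M[k]_n) (g : 'M[k]_n) : Prop :=
  G g /\ limit_at0 G (conj_curve lam g) g.

Definition rel_Gcr (G M H : 'M[k]_n -> Prop) : Prop :=
  forall lam, cocharacter M lam -> (forall h, H h -> Pl G lam h) ->
    exists mu, [/\ cocharacter M mu, (forall g, Pl G lam g <-> Pl G mu g)
                 & (forall h, H h -> Ll G mu h)].

End AlgGroups.

(* direct product G1 x G2 embedded block-diagonally in GL_(n1+n2) *)
Definition prod_set (k : closedFieldType) (n1 n2 : nat)
  (S1 : 'M[k]_n1 -> Prop) (S2 : 'M[k]_n2 -> Prop) : 'M[k]_(n1 + n2) -> Prop :=
  fun g => exists g1 g2, [/\ S1 g1, S2 g2 & g = block_mx g1 0 0 g2].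

Definition trivial_group (k : closedFieldType) (n : nat) : 'M[k]_n -> Prop :=
  fun g => g = 1%:M.

(* A cocharacter of K1 x K2 is a pair (l1, l2) of cocharacters, and
   conjugation by it acts blockwise, so P_(l1,l2) = P_l1 x P_l2 and
   L_(l1,l2) = L_l1 x L_l2.  Hence H is relatively G-completely reducible with
   respect to K1 x K2 iff each projection pi_i(H) is relatively
   G_i-completely reducible with respect to K_i.  For K_2 = 1 the second
   condition is automatic (the only cocharacter is trivial and P = L = G_2),
   so both sides of the corollary reduce to the same pair of conditions on
   pi_1(H) and pi_2(H). *)

From mathcomp Require Import all_boot all_order all_algebra all_field.
Set Implicit Arguments.
Unset Strict Implicit.
Unset Printing Implicit Defensive.
Import GRing.Theory.
Local Open Scope ring_scope.

Local Notation bdiag x y := (block_mx x 0 0 y).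

Section Curves.
Variables (k : closedFieldType) (n : nat).
Implicit Types (G M : 'M[k]_n -> Prop) (f lam : k -> 'M[k]_n) (g : 'M[k]_n).

Lemma limit_at0_const G f g :
  (forall a, a != 0 -> f a = g) -> G g -> limit_at0 G f g.
Proof.
move=> fg Gg; split=> //; exists (fun i j => (g i j)%:P).
by split=> [a a0 i j|i j]; rewrite ?fg // hornerC.
Qed.

Lemma conj_curve_trivial lam g :
  (forall a, a != 0 -> lam a = 1%:M) ->
  forall a, a != 0 -> conj_curve lam g a = g.
Proof.
by move=> lam1 a a0; rewrite /conj_curve lam1 // mul1mx invmx1 mulmx1.
Qed.

Lemma Pl_trivial G lam g :
  (forall a, a != 0 -> lam a = 1%:M) -> Pl G lam g <-> G g.
Proof.
move=> lam1; split=> [[] //|Gg]; split=> //; exists g.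
exact: limit_at0_const (conj_curve_trivial g lam1) Gg.
Qed.

Lemma Ll_trivial G lam g :
  (forall a, a != 0 -> lam a = 1%:M) -> Ll G lam g <-> G g.
Proof.
move=> lam1; split=> [[] //|Gg]; split=> //.
exact: limit_at0_const (conj_curve_trivial g lam1) Gg.
Qed.

Lemma Pl1 G lam :
  (forall a, a != 0 -> lam a \in unitmx) -> G 1%:M -> Pl G lam 1%:M.
Proof.
move=> lam_unit G1; split=> //; exists 1%:M; apply: limit_at0_const G1 => a a0.
by rewrite /conj_curve mulmx1 mulmxV ?lam_unit.
Qed.

Lemma cocharacter_unit M lam :
  cocharacter M lam -> (forall g, M g -> g \in unitmx) ->
  forall a, a != 0 -> lam a \in unitmx.
Proof. by move=> [M_lam _ _] M_unit a a0; exact/M_unit/M_lam. Qed.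

Lemma cocharacter1 M : M 1%:M -> cocharacter M (fun=> 1%:M).
Proof.
move=> M1; split=> [//|a b _ _|]; first by rewrite mulmx1.
exists 0%N, (fun i j => ((1%:M : 'M[k]_n) i j)%:P) => a _ i j.
by rewrite mul1r hornerC.
Qed.

End Curves.

Section BlockDiagonal.
Variables (k : closedFieldType) (n1 n2 : nat).
Implicit Types (x : 'M[k]_n1) (y : 'M[k]_n2).

Lemma block_diag_inj x y x' y' : bdiag x y = bdiag x' y' -> x = x' /\ y = y'.
Proof.
move=> eq_xy; split.
  by have := congr1 ulsubmx eq_xy; rewrite !block_mxKul.
by have := congr1 drsubmx eq_xy; rewrite !block_mxKdr.
Qed.

Lemma mul_block_diag x y x' y' :
  bdiag x y *m bdiag x' y' = bdiag (x *m x') (y *m y').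
Proof. by rewrite mulmx_block !mulmx0 !mul0mx !addr0 !add0r. Qed.

Lemma unitmx_block_diag x y :
  x \in unitmx -> y \in unitmx -> bdiag x y \in unitmx.
Proof. by rewrite !unitmxE det_ublock => ux uy; rewrite unitrM ux uy. Qed.

Lemma invmx_block_diag x y : x \in unitmx -> y \in unitmx ->
  invmx (bdiag x y) = bdiag (invmx x) (invmx y).
Proof.
move=> ux uy; rewrite -[RHS](mulKmx (unitmx_block_diag ux uy)).
by rewrite mul_block_diag !mulmxV // -scalar_mx_block mulmx1.
Qed.

Lemma prod_set_block_diag (S1 : 'M[k]_n1 -> Prop) (S2 : 'M[k]_n2 -> Prop)
    (g1 : 'M[k]_n1) (g2 : 'M[k]_n2) :
  prod_set S1 S2 (bdiag g1 g2) <-> S1 g1 /\ S2 g2.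
Proof.
split=> [[h1 [h2 [S1h1 S2h2 /block_diag_inj[-> ->]]]] //|[S1g1 S2g2]].
by exists g1, g2.
Qed.

Lemma conj_curve_block_diag (lam : k -> 'M[k]_(n1 + n2))
    (m1 : k -> 'M[k]_n1) (m2 : k -> 'M[k]_n2)
    (g1 : 'M[k]_n1) (g2 : 'M[k]_n2) :
  (forall a, a != 0 -> lam a = bdiag (m1 a) (m2 a)) ->
  (forall a, a != 0 -> m1 a \in unitmx /\ m2 a \in unitmx) ->
  forall a, a != 0 -> conj_curve lam (bdiag g1 g2) a =
                      bdiag (conj_curve m1 g1 a) (conj_curve m2 g2 a).
Proof.
move=> eq_lam m_unit a a0; have [u1 u2] := m_unit a a0.
by rewrite /conj_curve eq_lam // invmx_block_diag // !mul_block_diag.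
Qed.

(* The polynomial witnesses are assembled blockwise, with zero off-diagonal. *)
Lemma limit_at0_block_diag (G1 : 'M[k]_n1 -> Prop) (G2 : 'M[k]_n2 -> Prop)
    (f : k -> 'M[k]_(n1 + n2)) (f1 : k -> 'M[k]_n1) (f2 : k -> 'M[k]_n2)
    (L1 : 'M[k]_n1) (L2 : 'M[k]_n2) :
  (forall a, a != 0 -> f a = bdiag (f1 a) (f2 a)) ->
  limit_at0 (prod_set G1 G2) f (bdiag L1 L2) <->
  limit_at0 G1 f1 L1 /\ limit_at0 G2 f2 L2.
Proof.
move=> eq_f; split.
  case=> /prod_set_block_diag[G1L1 G2L2] [q [fq Lq]]; split; split=> //.
    exists (fun i j => q (lshift n2 i) (lshift n2 j)); split=> [a a0 i j|i j].
      by rewrite -fq // eq_f // block_mxEul.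
    by rewrite -Lq block_mxEul.
  exists (fun i j => q (rshift n1 i) (rshift n1 j)); split=> [a a0 i j|i j].
    by rewrite -fq // eq_f // block_mxEdr.
  by rewrite -Lq block_mxEdr.
case=> -[G1L1 [q1 [f1q1 L1q1]]] [G2L2 [q2 [f2q2 L2q2]]].
split; first exact/prod_set_block_diag.
pose Q := block_mx (\matrix_(i, j) q1 i j) 0 0 (\matrix_(i, j) q2 i j).
have evalQ (c : k) (A : 'M[k]_n1) (B : 'M[k]_n2) :
    (forall i j, A i j = (q1 i j).[c]) -> (forall i j, B i j = (q2 i j).[c]) ->
  bdiag A B = map_mx (horner^~ c) Q.
  move=> Aq Bq; rewrite map_block_mx.
  by congr block_mx; apply/matrixP=> i j; rewrite !mxE ?horner0.
exists (fun i j => Q i j); split=> [a a0 i j|i j].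
  by rewrite eq_f // (evalQ a) ?mxE // => ? ?; [exact: f1q1 | exact: f2q2].
by rewrite (evalQ 0) ?mxE.
Qed.

Lemma Pl_block_diag (G1 : 'M[k]_n1 -> Prop) (G2 : 'M[k]_n2 -> Prop)
    (lam : k -> 'M[k]_(n1 + n2)) (m1 : k -> 'M[k]_n1) (m2 : k -> 'M[k]_n2)
    (g1 : 'M[k]_n1) (g2 : 'M[k]_n2) :
  (forall a, a != 0 -> lam a = bdiag (m1 a) (m2 a)) ->
  (forall a, a != 0 -> m1 a \in unitmx /\ m2 a \in unitmx) ->
  Pl (prod_set G1 G2) lam (bdiag g1 g2) <-> Pl G1 m1 g1 /\ Pl G2 m2 g2.
Proof.
move=> eq_lam m_unit; have conjE := conj_curve_block_diag g1 g2 eq_lam m_unit.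
split.
  case=> /prod_set_block_diag[G1g1 G2g2] [L limL].
  have [L1 [L2 [_ _ eq_L]]] : prod_set G1 G2 L by case: limL.
  rewrite eq_L in limL.
  have [lim1 lim2] := (limit_at0_block_diag _ _ _ _ conjE).1 limL.
  by split; split=> //; [exists L1 | exists L2].
case=> -[G1g1 [L1 lim1]] [G2g2 [L2 lim2]].
split; first exact/prod_set_block_diag.
by exists (bdiag L1 L2); apply/(limit_at0_block_diag _ _ _ _ conjE).
Qed.

Lemma Ll_block_diag (G1 : 'M[k]_n1 -> Prop) (G2 : 'M[k]_n2 -> Prop)
    (lam : k -> 'M[k]_(n1 + n2)) (m1 : k -> 'M[k]_n1) (m2 : k -> 'M[k]_n2)
    (g1 : 'M[k]_n1) (g2 : 'M[k]_n2) :
  (forall a, a != 0 -> lam a = bdiag (m1 a) (m2 a)) ->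
  (forall a, a != 0 -> m1 a \in unitmx /\ m2 a \in unitmx) ->
  Ll (prod_set G1 G2) lam (bdiag g1 g2) <-> Ll G1 m1 g1 /\ Ll G2 m2 g2.
Proof.
move=> eq_lam m_unit; have conjE := conj_curve_block_diag g1 g2 eq_lam m_unit.
rewrite /Ll prod_set_block_diag (limit_at0_block_diag _ _ _ _ conjE); tauto.
Qed.

Lemma cocharacter_prod_split (K1 : 'M[k]_n1 -> Prop) (K2 : 'M[k]_n2 -> Prop)
    (lam : k -> 'M[k]_(n1 + n2)) :
  cocharacter (prod_set K1 K2) lam ->
  exists m1 m2, [/\ cocharacter K1 m1, cocharacter K2 m2 &
                    forall a, a != 0 -> lam a = bdiag (m1 a) (m2 a)].
Proof.
case=> K_lam lam_mul [N [q lamq]].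
exists (fun a => ulsubmx (lam a)), (fun a => drsubmx (lam a)).
have lamE a : a != 0 -> lam a = bdiag (ulsubmx (lam a)) (drsubmx (lam a)).
  by move/K_lam=> [g1 [g2 [_ _ ->]]]; rewrite block_mxKul block_mxKdr.
have K_m a : a != 0 -> K1 (ulsubmx (lam a)) /\ K2 (drsubmx (lam a)).
  by move=> a0; apply/prod_set_block_diag; rewrite -lamE //; apply: K_lam.
have m_mul a b : a != 0 -> b != 0 ->
    ulsubmx (lam (a * b)) = ulsubmx (lam a) *m ulsubmx (lam b) /\
    drsubmx (lam (a * b)) = drsubmx (lam a) *m drsubmx (lam b).
  move=> a0 b0; apply: block_diag_inj.
  by rewrite -mul_block_diag -!lamE ?mulf_neq0 ?lam_mul.
split=> //; split=> [a /K_m[] //|a b a0 b0|]; try by case: (m_mul a b a0 b0).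
- exists N, (fun i j => q (lshift n2 i) (lshift n2 j)) => a a0 i j.
  by rewrite -lamq // [in RHS]lamE // block_mxEul.
- exists N, (fun i j => q (rshift n1 i) (rshift n1 j)) => a a0 i j.
  by rewrite -lamq // [in RHS]lamE // block_mxEdr.
Qed.

Lemma cocharacter_block_diag (K1 : 'M[k]_n1 -> Prop) (K2 : 'M[k]_n2 -> Prop)
    (m1 : k -> 'M[k]_n1) (m2 : k -> 'M[k]_n2) :
  cocharacter K1 m1 -> cocharacter K2 m2 ->
  cocharacter (prod_set K1 K2) (fun a => bdiag (m1 a) (m2 a)).
Proof.
case=> K_m1 m1_mul [N1 [q1 m1q]] [K_m2 m2_mul [N2 [q2 m2q]]]; split.
- by move=> a a0; apply/prod_set_block_diag; split; [apply: K_m1 | apply: K_m2].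
- by move=> a b a0 b0; rewrite m1_mul // m2_mul // mul_block_diag.
pose Q := block_mx (\matrix_(i, j) ('X^N2 * q1 i j)) 0 0
                   (\matrix_(i, j) ('X^N1 * q2 i j)).
exists (N1 + N2)%N, (fun i j => Q i j) => a a0 i j.
suff scaleE : a ^+ (N1 + N2) *: bdiag (m1 a) (m2 a) = map_mx (horner^~ a) Q.
  by move/matrixP/(_ i j): scaleE; rewrite !mxE.
rewrite scale_block_mx !scaler0 map_block_mx; congr block_mx;
  apply/matrixP=> i' j'; rewrite !mxE ?horner0 // hornerM hornerXn.
  by rewrite -m1q // exprD mulrA [a ^+ N2 * _]mulrC.
by rewrite -m2q // exprD mulrA.
Qed.

End BlockDiagonal.

Section Projections.
Variables (k : closedFieldType) (n1 n2 : nat).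

Definition proj1_set (S : 'M[k]_(n1 + n2) -> Prop) : 'M[k]_n1 -> Prop :=
  fun g1 => exists g2, S (bdiag g1 g2).

Definition proj2_set (S : 'M[k]_(n1 + n2) -> Prop) : 'M[k]_n2 -> Prop :=
  fun g2 => exists g1, S (bdiag g1 g2).

Variables (G1 : 'M[k]_n1 -> Prop) (G2 : 'M[k]_n2 -> Prop).

Lemma proj1_set_sub (S : 'M[k]_(n1 + n2) -> Prop) :
  (forall g, S g -> prod_set G1 G2 g) -> forall g1, proj1_set S g1 -> G1 g1.
Proof. by move=> SG g1 [g2 /SG/prod_set_block_diag[]]. Qed.

Lemma proj2_set_sub (S : 'M[k]_(n1 + n2) -> Prop) :
  (forall g, S g -> prod_set G1 G2 g) -> forall g2, proj2_set S g2 -> G2 g2.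
Proof. by move=> SG g2 [g1 /SG/prod_set_block_diag[]]. Qed.

Lemma sub_block_diag_pred (S P : 'M[k]_(n1 + n2) -> Prop)
    (P1 : 'M[k]_n1 -> Prop) (P2 : 'M[k]_n2 -> Prop) :
  (forall g, S g -> prod_set G1 G2 g) ->
  (forall g1 g2, P (bdiag g1 g2) <-> P1 g1 /\ P2 g2) ->
  (forall g, S g -> P g) <->
  (forall g1, proj1_set S g1 -> P1 g1) /\ (forall g2, proj2_set S g2 -> P2 g2).
Proof.
move=> SG PE; split=> [SP|[SP1 SP2] g Sg].
  by split=> [g1 [g2 /SP/PE[]] | g2 [g1 /SP/PE[]]].
have [g1 [g2 [_ _ gE]]] := SG g Sg; rewrite gE in Sg *.
by apply/PE; split; [apply: SP1; exists g2 | apply: SP2; exists g1].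
Qed.

(* Slicing at the identity in the other factor recovers each factor. *)
Lemma eq_block_diag_pred (P Q : 'M[k]_(n1 + n2) -> Prop)
    (P1 Q1 : 'M[k]_n1 -> Prop) (P2 Q2 : 'M[k]_n2 -> Prop) :
  (forall g, P g -> prod_set G1 G2 g) -> (forall g, Q g -> prod_set G1 G2 g) ->
  (forall g1 g2, P (bdiag g1 g2) <-> P1 g1 /\ P2 g2) ->
  (forall g1 g2, Q (bdiag g1 g2) <-> Q1 g1 /\ Q2 g2) ->
  P1 1%:M -> Q1 1%:M -> P2 1%:M -> Q2 1%:M ->
  (forall g, P g <-> Q g) <->
  (forall g1, P1 g1 <-> Q1 g1) /\ (forall g2, P2 g2 <-> Q2 g2).
Proof.
move=> PG QG PE QE P1_1 Q1_1 P2_1 Q2_1; split=> [PQ|[PQ1 PQ2] g].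
  split=> [g1|g2].
    by have := PQ (bdiag g1 1%:M); rewrite PE QE; tauto.
  by have := PQ (bdiag 1%:M g2); rewrite PE QE; tauto.
split=> [/[dup] /PG|/[dup] /QG] [g1 [g2 [_ _ ->]]]; rewrite PE QE PQ1 PQ2 //.
Qed.

End Projections.

Section RelGcrProd.
Variables (k : closedFieldType) (n1 n2 : nat).
Variables (G1 K1 : 'M[k]_n1 -> Prop) (G2 K2 : 'M[k]_n2 -> Prop).
Variable H : 'M[k]_(n1 + n2) -> Prop.
Hypotheses (K1_unit : forall g, K1 g -> g \in unitmx)
           (K2_unit : forall g, K2 g -> g \in unitmx).
Hypotheses (K1_1 : K1 1%:M) (K2_1 : K2 1%:M) (G1_1 : G1 1%:M) (G2_1 : G2 1%:M).
Hypothesis H_G : forall h, H h -> prod_set G1 G2 h.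

Local Notation G := (prod_set G1 G2).

Section BlockCocharacter.
Variables (lam : k -> 'M[k]_(n1 + n2)).
Variables (m1 : k -> 'M[k]_n1) (m2 : k -> 'M[k]_n2).
Hypotheses (m1_cochar : cocharacter K1 m1) (m2_cochar : cocharacter K2 m2).
Hypothesis lamE : forall a, a != 0 -> lam a = bdiag (m1 a) (m2 a).

Let m1_unit := cocharacter_unit m1_cochar K1_unit.
Let m2_unit := cocharacter_unit m2_cochar K2_unit.
Let m_unit a (a0 : a != 0) := conj (m1_unit a0) (m2_unit a0).

Lemma sub_Pl_prod :
  (forall h, H h -> Pl G lam h) <->
  (forall h1, proj1_set H h1 -> Pl G1 m1 h1) /\
  (forall h2, proj2_set H h2 -> Pl G2 m2 h2).
Proof.
by apply: sub_block_diag_pred H_G _ => g1 g2; apply: Pl_block_diag lamE m_unit.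
Qed.

Lemma sub_Ll_prod :
  (forall h, H h -> Ll G lam h) <->
  (forall h1, proj1_set H h1 -> Ll G1 m1 h1) /\
  (forall h2, proj2_set H h2 -> Ll G2 m2 h2).
Proof.
by apply: sub_block_diag_pred H_G _ => g1 g2; apply: Ll_block_diag lamE m_unit.
Qed.

Lemma eq_Pl_prod mu m1' m2' :
  cocharacter K1 m1' -> cocharacter K2 m2' ->
  (forall a, a != 0 -> mu a = bdiag (m1' a) (m2' a)) ->
  (forall g, Pl G lam g <-> Pl G mu g) <->
  (forall g1, Pl G1 m1 g1 <-> Pl G1 m1' g1) /\
  (forall g2, Pl G2 m2 g2 <-> Pl G2 m2' g2).
Proof.
move=> m1'_cochar m2'_cochar muE.
have m1'_unit := cocharacter_unit m1'_cochar K1_unit.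
have m2'_unit := cocharacter_unit m2'_cochar K2_unit.
have m'_unit a (a0 : a != 0) := conj (m1'_unit a a0) (m2'_unit a a0).
apply: (@eq_block_diag_pred _ _ _ G1 G2)
  => [g [] | g [] | g1 g2 | g1 g2 | | | |] //.
- exact: Pl_block_diag lamE m_unit.
- exact: Pl_block_diag muE m'_unit.
- exact: Pl1 m1_unit G1_1.
- exact: Pl1 m1'_unit G1_1.
- exact: Pl1 m2_unit G2_1.
- exact: Pl1 m2'_unit G2_1.
Qed.

End BlockCocharacter.

Lemma rel_Gcr_proj1 :
  rel_Gcr G (prod_set K1 K2) H -> rel_Gcr G1 K1 (proj1_set H).
Proof.
move=> GcrH l1 l1_cochar HP1.
have one_cochar := cocharacter1 K2_1.
pose lam a := bdiag (l1 a) (1%:M : 'M[k]_n2).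
have lamE a : a != 0 -> lam a = bdiag (l1 a) 1%:M by [].
have HP : forall h, H h -> Pl G lam h.
  apply/(sub_Pl_prod l1_cochar one_cochar lamE); split=> // h2.
  by move/(proj2_set_sub H_G) => G2h2; apply/Pl_trivial.
have [mu [mu_cochar eq_Pl HL]] :=
  GcrH _ (cocharacter_block_diag l1_cochar one_cochar) HP.
have [m1 [m2 [m1_cochar m2_cochar muE]]] := cocharacter_prod_split mu_cochar.
exists m1; split=> //.
  by case/(eq_Pl_prod l1_cochar one_cochar lamE m1_cochar m2_cochar muE): eq_Pl.
by case/(sub_Ll_prod m1_cochar m2_cochar muE): HL.
Qed.

Lemma rel_Gcr_proj2 :
  rel_Gcr G (prod_set K1 K2) H -> rel_Gcr G2 K2 (proj2_set H).
Proof.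
move=> GcrH l2 l2_cochar HP2.
have one_cochar := cocharacter1 K1_1.
pose lam a := bdiag (1%:M : 'M[k]_n1) (l2 a).
have lamE a : a != 0 -> lam a = bdiag 1%:M (l2 a) by [].
have HP : forall h, H h -> Pl G lam h.
  apply/(sub_Pl_prod one_cochar l2_cochar lamE); split=> // h1.
  by move/(proj1_set_sub H_G) => G1h1; apply/Pl_trivial.
have [mu [mu_cochar eq_Pl HL]] :=
  GcrH _ (cocharacter_block_diag one_cochar l2_cochar) HP.
have [m1 [m2 [m1_cochar m2_cochar muE]]] := cocharacter_prod_split mu_cochar.
exists m2; split=> //.
  by case/(eq_Pl_prod one_cochar l2_cochar lamE m1_cochar m2_cochar muE): eq_Pl.
by case/(sub_Ll_prod m1_cochar m2_cochar muE): HL.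
Qed.

Lemma rel_Gcr_of_proj :
  rel_Gcr G1 K1 (proj1_set H) -> rel_Gcr G2 K2 (proj2_set H) ->
  rel_Gcr G (prod_set K1 K2) H.
Proof.
move=> Gcr1 Gcr2 lam lam_cochar HP.
have [l1 [l2 [l1_cochar l2_cochar lamE]]] := cocharacter_prod_split lam_cochar.
have [HP1 HP2] := (sub_Pl_prod l1_cochar l2_cochar lamE).1 HP.
have [m1 [m1_cochar eq_Pl1 HL1]] := Gcr1 l1 l1_cochar HP1.
have [m2 [m2_cochar eq_Pl2 HL2]] := Gcr2 l2 l2_cochar HP2.
pose mu a := bdiag (m1 a) (m2 a).
have muE a : a != 0 -> mu a = bdiag (m1 a) (m2 a) by [].
exists mu; split.
- exact: cocharacter_block_diag.
- exact/(eq_Pl_prod l1_cochar l2_cochar lamE m1_cochar m2_cochar muE).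
- exact/(sub_Ll_prod m1_cochar m2_cochar muE).
Qed.

Lemma rel_Gcr_prod :
  rel_Gcr G (prod_set K1 K2) H <->
  rel_Gcr G1 K1 (proj1_set H) /\ rel_Gcr G2 K2 (proj2_set H).
Proof.
split=> [GcrH | [Gcr1 Gcr2]]; last exact: rel_Gcr_of_proj.
by split; [apply: rel_Gcr_proj1 | apply: rel_Gcr_proj2].
Qed.

End RelGcrProd.

Lemma rel_Gcr_trivial (k : closedFieldType) (n : nat) (G H : 'M[k]_n -> Prop) :
  (forall h, H h -> G h) -> rel_Gcr G (@trivial_group k n) H.
Proof.
move=> H_G lam lam_cochar _; exists lam; split=> // h /H_G Gh.
by case: lam_cochar => lam1 _ _; apply/Ll_trivial.
Qed.

Theorem corollary4p6 (k : closedFieldType) (n1 n2 : nat)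
  (G1 K1 : 'M[k]_n1 -> Prop) (G2 K2 : 'M[k]_n2 -> Prop)
  (H : 'M[k]_(n1 + n2) -> Prop) :
  reductive G1 -> reductive G2 -> reductive K1 -> reductive K2 ->
  closed_subgroup K1 G1 -> closed_subgroup K2 G2 ->
  is_subgroup H (prod_set G1 G2) ->
  (rel_Gcr (prod_set G1 G2) (prod_set K1 K2) H <->
   (rel_Gcr (prod_set G1 G2) (prod_set K1 (@trivial_group k n2)) H /\
    rel_Gcr (prod_set G1 G2) (prod_set (@trivial_group k n1) K2) H)).
Proof.
move=> _ _ _ _ [[K1_1 _ K1_inv K1_G] _] [[K2_1 _ K2_inv K2_G] _] [_ _ _ H_G].
have K1_unit g : K1 g -> g \in unitmx by case/K1_inv.
have K2_unit g : K2 g -> g \in unitmx by case/K2_inv.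
have triv_unit m (g : 'M[k]_m) : trivial_group g -> g \in unitmx.
  by move->; apply: unitmx1.
have G1_1 := K1_G _ K1_1; have G2_1 := K2_G _ K2_1.
rewrite (rel_Gcr_prod K1_unit K2_unit) //.
rewrite (rel_Gcr_prod K1_unit (triv_unit _)) //.
rewrite (rel_Gcr_prod (triv_unit _) K2_unit) //.
have := rel_Gcr_trivial (proj1_set_sub H_G).
have := rel_Gcr_trivial (proj2_set_sub H_G).
tauto.
Qed.
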